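(* For $\alpha_2\in\mathbb{C}$ consider the system $$\frac{dx}{dt}=y,\quad \frac{dy}{dt}=z,\quad \frac{dz}{dt}=-6y^2+w+\frac t4,\quad \frac{dw}{dt}=wq+\frac{2\alpha_2-1}{4},\quad \frac{dq}{dt}=-\frac12q^2-4y .$$ Write $( * )=(x,y,z,w,q,t;\alpha_2)$ and $D:=t+2w+2yq^2-8y^2-4zq$. Define $$s_0:( * )\mapsto\left(x,y,z,w,q+\frac{\alpha_2-\frac12}{w},t;1-\alpha_2\right),$$ $$s_1:( * )\mapsto\Big(x+\frac{2\alpha_2+1}{2D},\ y+\frac{(2\alpha_2+1)q}{2D}-\frac{(2\alpha_2+1)^2}{4D^2},\ z+\frac{(2\alpha_2+1)(q^2-8y)}{4D}-\frac{3(2\alpha_2+1)^2q}{4D^2}+\frac{(2\alpha_2+1)^3}{4D^3},$$ $$w+\frac{2(2\alpha_2+1)(yq-z)}{D}+\frac{(2\alpha_2+1)^2(q^2+4y)}{4D^2},\ q-\frac{2\alpha_2+1}{D},\ t;\ -1-\alpha_2\Big),$$ $$\pi:( * )\mapsto\left(x+\frac q2,\ -\left(y+\frac{q^2}{4}\right),\ -\left(z-\frac14q(q^2+8y)\right),\ -\left(w+yq^2-4y^2-2zq+\frac t2\right),\ -q,\ t;\ -\alpha_2\right).$$ Then $s_0,s_1,\pi$ are Bäcklund transformations of this system (each maps solutions with parameter $\alpha_2$ to solutions with the transformed parameter), and they generate a group of Bäcklund transformations realizing the extended affine Weyl group of type $A_1^{(1)}$.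
   Context: The extended affine Weyl group of type $A_1^{(1)}$ is the group generated by $s_0,s_1,\pi$ with the relations $s_0^2=s_1^2=\pi^2=1$ and $\pi s_0=s_1\pi$. A transformation is applied to a rational function $g$ of $(x,y,z,w,q,t,\alpha_2)$ by substituting the images of the variables and the parameter into $g$. *)

From HB Require Import structures.
From mathcomp Require Import all_boot all_order all_algebra.
Set Implicit Arguments. Unset Strict Implicit. Unset Printing Implicit Defensive.
Import GRing.Theory.
Local Open Scope ring_scope.

(* A point (x,y,z,w,q,t;alpha2) of the extended phase space, with coordinates
   in a field K (typically a differential field of functions of t). *)
Record pt (K : Type) := Pt { px : K; py : K; pz : K; pw : K; pq : K; pt_t : K; pa : K }.

Section Defs.
Variable K : fieldType.

Definition is_derivation (d : K -> K) : Prop :=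
  (forall a b, d (a + b) = d a + d b) /\ (forall a b, d (a * b) = d a * b + a * d b).

(* The point p satisfies the system (with independent variable t, i.e. d t = 1,
   and constant parameter alpha2, i.e. d alpha2 = 0). *)
Definition is_solution (d : K -> K) (p : pt K) : Prop :=
  let: Pt x y z w q t a := p in
  (d t = 1 /\ d a = 0) /\
  [/\ d x = y, d y = z,
      d z = - 6%:R * y ^+ 2 + w + t / 4%:R,
      d w = w * q + (2%:R * a - 1) / 4%:R &
      d q = - (q ^+ 2) / 2%:R - 4%:R * y].

Definition Dfun (p : pt K) : K :=
  let: Pt x y z w q t a := p in
  t + 2%:R * w + 2%:R * y * q ^+ 2 - 8%:R * y ^+ 2 - 4%:R * z * q.

Definition s0 (p : pt K) : pt K :=
  let: Pt x y z w q t a := p in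
  Pt x y z w (q + (a - 1 / 2%:R) / w) t (1 - a).

Definition s1 (p : pt K) : pt K :=
  let: Pt x y z w q t a := p in
  let D := Dfun p in
  let b := 2%:R * a + 1 in
  Pt (x + b / (2%:R * D))
     (y + b * q / (2%:R * D) - b ^+ 2 / (4%:R * D ^+ 2))
     (z + b * (q ^+ 2 - 8%:R * y) / (4%:R * D) - 3%:R * b ^+ 2 * q / (4%:R * D ^+ 2)
        + b ^+ 3 / (4%:R * D ^+ 3))
     (w + 2%:R * b * (y * q - z) / D + b ^+ 2 * (q ^+ 2 + 4%:R * y) / (4%:R * D ^+ 2))
     (q - b / D)
     t
     (- 1 - a).

Definition bpi (p : pt K) : pt K :=
  let: Pt x y z w q t a := p in
  Pt (x + q / 2%:R)
     (- (y + q ^+ 2 / 4%:R))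
     (- (z - q * (q ^+ 2 + 8%:R * y) / 4%:R))
     (- (w + y * q ^+ 2 - 4%:R * y ^+ 2 - 2%:R * z * q + t / 2%:R))
     (- q)
     t
     (- a).

End Defs.

From HB Require Import structures.
From mathcomp Require Import all_boot all_order all_algebra.
From mathcomp Require Import ring.
Import GRing.Theory.
Local Open Scope ring_scope.

(* Every claim is an identity of rational functions once the derivatives of
   the coordinates are replaced by the right-hand sides of the system.  The
   key quantity is [D = Dfun p]: along solutions it satisfies the linear
   equation [D' = (2 alpha2 + 1)/2 - q D], it is invariant under [s1], and
   [pi] sends it to [-2 w].  Eliminating [t] in favour of [D] makes the [s1]
   identities rational in [D] alone. *)

Section Derivation.
Variables (K : fieldType) (d : K -> K).
Hypothesis derivation_d : is_derivation d.

Lemma derivD u v : d (u + v) = d u + d v.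
Proof. by case: derivation_d. Qed.

Lemma derivM u v : d (u * v) = d u * v + u * d v.
Proof. by case: derivation_d. Qed.

Lemma deriv0 : d 0 = 0.
Proof. by apply: (addrI (d 0)); rewrite -derivD !addr0. Qed.

Lemma deriv1 : d 1 = 0.
Proof. by apply: (addrI (d 1)); rewrite addr0 -[in RHS](mulr1 1) derivM mulr1 mul1r. Qed.

Lemma derivN u : d (- u) = - d u.
Proof. by apply/eqP; rewrite -addr_eq0 -derivD addNr deriv0. Qed.

Lemma deriv_nat n : d n%:R = 0.
Proof.
elim: n => [|n IHn]; first exact: deriv0.
by rewrite -addn1 natrD derivD IHn deriv1 addr0.
Qed.

Lemma derivV u : d u^-1 = - d u / u ^+ 2.
Proof.
have [->|u_neq0] := eqVneq u 0; first by rewrite invr0 deriv0 expr0n /= invr0 mulr0.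
have hu : d u * u^-1 + u * d u^-1 = 0 by rewrite -derivM divff // deriv1.
have -> : d u^-1 = u^-1 * (u * d u^-1) by rewrite mulrA mulVf // mul1r.
by rewrite -(addr0_eq hu); field.
Qed.

Definition derivE := (derivD, derivM, derivN, derivV, deriv_nat, deriv1).

End Derivation.

Section Backlund.
Variable K : fieldType.
Hypothesis charK : [pchar K] =i pred0.

Let natS_neq0 n : n.+1%:R != 0 :> K.
Proof. by move/pcharf0P: charK => ->. Qed.

Lemma time_Dfun (p : pt K) : pt_t p =
  Dfun p - (2%:R * pw p + 2%:R * py p * pq p ^+ 2 - 8%:R * py p ^+ 2 - 4%:R * pz p * pq p).
Proof. by case: p => x y z w q t a /=; ring. Qed.

Lemma Dfun_bpi (p : pt K) : Dfun (bpi p) = - (2%:R * pw p).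
Proof. case: p => x y z w q t a /=; field; by rewrite ?natS_neq0. Qed.

Lemma Dfun_s1 (p : pt K) : Dfun p != 0 -> Dfun (s1 p) = Dfun p.
Proof.
have := time_Dfun p.
case: p => x y z w q t a; rewrite /s1.
set D := Dfun _ => /= ->.
by clearbody D => D_neq0; rewrite /Dfun /=; field; rewrite !natS_neq0 D_neq0.
Qed.

Lemma s0K (p : pt K) : pw p != 0 -> s0 (s0 p) = p.
Proof.
case: p => x y z w q t a /= w_neq0.
f_equal; field; by rewrite ?natS_neq0 ?w_neq0.
Qed.

Lemma s1K (p : pt K) : Dfun p != 0 -> s1 (s1 p) = p.
Proof.
move=> D_neq0; rewrite {1}/s1 Dfun_s1 //.
case: p D_neq0 => x y z w q t a; rewrite /s1.
set D := Dfun _.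
clearbody D => D_neq0 /=; f_equal; field; by rewrite ?natS_neq0 ?D_neq0.
Qed.

Lemma bpiK (p : pt K) : bpi (bpi p) = p.
Proof. case: p => x y z w q t a /=; f_equal; field; by rewrite ?natS_neq0. Qed.

Lemma bpi_s0 (p : pt K) : pw p != 0 -> bpi (s0 p) = s1 (bpi p).
Proof.
move=> w_neq0; rewrite /s1 Dfun_bpi.
case: p w_neq0 => x y z w q t a /= w_neq0.
have Dbpi_neq0 : - (2%:R * w) != 0 by rewrite oppr_eq0 mulf_neq0 ?natS_neq0.
f_equal; field; by rewrite ?Dbpi_neq0 ?natS_neq0 ?w_neq0.
Qed.

Variable d : K -> K.
Hypothesis derivation_d : is_derivation d.

Lemma deriv_Dfun (p : pt K) : is_solution d p ->
  d (Dfun p) = (2%:R * pa p + 1) / 2%:R - pq p * Dfun p.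
Proof.
case: p => x y z w q t a [[dt _] [_ dy dz dw dq]] /=.
rewrite ?exprS ?expr0 ?(@derivE _ _ derivation_d) dt dy dz dw dq.
field; by rewrite ?natS_neq0.
Qed.

Lemma bpi_solution (p : pt K) : is_solution d p -> is_solution d (bpi p).
Proof.
case: p => x y z w q t a [[dt da] [dx dy dz dw dq]].
split; [split|split]; rewrite ?exprS ?expr0 ?(@derivE _ _ derivation_d);
  rewrite ?dt ?da ?dx ?dy ?dz ?dw ?dq; field; by rewrite ?natS_neq0.
Qed.

Lemma s0_solution (p : pt K) : is_solution d p -> pw p != 0 -> is_solution d (s0 p).
Proof.
case: p => x y z w q t a [[dt da] [dx dy dz dw dq]] /= w_neq0.
split; [split|split]; rewrite ?exprS ?expr0 ?(@derivE _ _ derivation_d);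
  rewrite ?dt ?da ?dx ?dy ?dz ?dw ?dq; field; by rewrite ?natS_neq0 ?w_neq0.
Qed.

Lemma s1_solution (p : pt K) : is_solution d p -> Dfun p != 0 -> is_solution d (s1 p).
Proof.
move=> sol_p; have := deriv_Dfun _ sol_p; have := time_Dfun p.
case: p sol_p => x y z w q t a [[dt da] [dx dy dz dw dq]]; rewrite /s1.
set D := Dfun _ => /= t_D dD.
clearbody D => D_neq0.
split; [split|split]; rewrite ?exprS ?expr0 ?(@derivE _ _ derivation_d);
  rewrite ?dt ?da ?dx ?dy ?dz ?dw ?dq ?dD ?t_D; field; by rewrite ?natS_neq0 ?D_neq0.
Qed.

End Backlund.

Theorem theorem9p2 (K : fieldType) (charK : [pchar K] =i pred0) :
  (* Backlund property: s0, s1, pi map solutions to solutions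
     (wherever the transformation is defined) *)
  (forall (d : K -> K) (p : pt K), is_derivation d -> is_solution d p ->
     [/\ pw p != 0 -> is_solution d (s0 p),
         Dfun p != 0 -> is_solution d (s1 p) &
         is_solution d (bpi p)]) /\
  (* defining relations of the extended affine Weyl group of type A_1^(1):
     s0^2 = s1^2 = pi^2 = 1 and pi s0 = s1 pi (as birational maps) *)
  (forall p : pt K, pw p != 0 -> s0 (s0 p) = p) /\
  (forall p : pt K, Dfun p != 0 -> Dfun (s1 p) != 0 -> s1 (s1 p) = p) /\
  (forall p : pt K, bpi (bpi p) = p) /\
  (forall p : pt K, pw p != 0 -> Dfun (bpi p) != 0 -> bpi (s0 p) = s1 (bpi p)).
Proof.
split.
  move=> d p derivation_d sol_p; split.
  - exact: s0_solution.
  - exact: s1_solution.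
  - exact: bpi_solution.
split; first exact: s0K.
split; first by move=> p D_neq0 _; exact: s1K.
split; first exact: bpiK.
by move=> p w_neq0 _; exact: bpi_s0.
Qed.
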